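(* If the elements $\{y_q+I_F^3:q\in Q\}$ are linearly independent in $(M+I_F^3)/I_F^3$, then $\pi^{Syz}_2$ is surjective (the PVH Criterion is satisfied in degree 2).
   Context: Let $K$ be an augmented unital $\mathbb{Q}$-algebra generated by a set $X$, $F$ the free unital $\mathbb{Q}$-algebra on $X$, and $I_F$ the kernel of the algebra map $F\to\mathbb{Q}$ sending each $x\in X$ to $1$. Let $\tilde X=\mathbb{Q}\{x-1:x\in X\}$, so $F=T\tilde X=\bigoplus_p\tilde X^p$ and $I_F^p=\bigoplus_{q\ge p}\tilde X^q$. Let $M\subseteq I_F^2$ be a two-sided ideal with $K=F/M$ (all algebras completed with respect to powers of augmentation ideals), generated by $\{y_q:q\in Q\}\subseteq I_F^2$. Let $Y_F=\{Y_q\}$ be symbols in bijection with the $y_q$, $R$ the free two-sided $F$-module on $Y_F$, $\partial_K:R\to F$ the bimodule map $Y_q\mapsto y_q$, $R_2=\mathbb{Q}Y_F$, $R_{\ge 2}=R$, $\pi^1_2:R\to R_2$ the projection onto degree 2 (grading with $Y_q$ in degree 2 and $\tilde X$ in degree 1), and $\partial_A:R_2\to\tilde X^2$ the map $Y_q\mapsto$ degree-2 component of $y_q$. $\pi^{Syz}_2:\ker\partial_K\to\ker\partial_A$ is the map induced by $\pi^1_2$. *)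

From mathcomp Require Import all_boot all_order all_algebra.
From mathcomp Require Import boolp classical_sets cardinality fsbigop.
Set Implicit Arguments. Unset Strict Implicit. Unset Printing Implicit Defensive.
Import GRing.Theory Num.Theory.
Local Open Scope classical_set_scope.
Local Open Scope ring_scope.

(* Completed free unital Q-algebra F on the generators X, written in the
   variables x-1 (x in X): an element is a noncommutative formal power series,
   i.e. a function from words over X to rat; the word [x1;..;xn] stands for the
   monomial (x1-1)...(xn-1), which lies in Xtilde^n. *)
Definition FQ (X : Type) := seq X -> rat.

(* f lies in I_F^p = prod_{q >= p} Xtilde^q *)
Definition in_IFpow (X : Type) (p : nat) (f : FQ X) : Prop :=
  forall w : seq X, (size w < p)%N -> f w = 0.

(* Completed free F-bimodule R on the symbols Y_q (q in Q), with Y_q of degree 2: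
   an element is a function r with r q u v the coefficient of u . Y_q . v,
   subject to the condition that each homogeneous component (degree n+2)
   is a finite linear combination. *)
Definition RQ (X : Type) (Q : choiceType) := Q -> seq X -> seq X -> rat.

Definition in_R (X : Type) (Q : choiceType) (r : RQ X Q) : Prop :=
  forall n : nat,
    finite_set [set t : Q * seq X * seq X |
                 (size t.1.2 + size t.2)%N = n /\ r t.1.1 t.1.2 t.2 != 0].

(* partial_K : R -> F, u Y_q v |-> u y_q v *)
Definition partialK (X : Type) (Q : choiceType) (y : Q -> FQ X) (r : RQ X Q)
  : FQ X := fun w =>
  \sum_(i < (size w).+1) \sum_(j < (size w).+1 | (i <= j)%N)
    \sum_(q \in [set: Q])
      r q (take i w) (drop j w) * y q (drop i (take j w)).

Definition in_kerK (X : Type) (Q : choiceType) (y : Q -> FQ X) (r : RQ X Q)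
  : Prop := in_R r /\ partialK y r = (fun _ => 0).

(* R_2 = Q Y_F : finite Q-linear combinations of the Y_q *)
Definition in_R2 (Q : choiceType) (z : Q -> rat) : Prop :=
  finite_set [set q | z q != 0].

(* pi^1_2 : R -> R_2, projection onto the degree-2 component *)
Definition pi12 (X : Type) (Q : choiceType) (r : RQ X Q) : Q -> rat :=
  fun q => r q [::] [::].

(* partial_A : R_2 -> Xtilde^2, Y_q |-> degree-2 component of y_q *)
Definition partialA (X : Type) (Q : choiceType) (y : Q -> FQ X) (z : Q -> rat)
  : FQ X := fun w =>
  if size w == 2%N then \sum_(q \in [set: Q]) z q * y q w else 0.

Definition in_kerA (X : Type) (Q : choiceType) (y : Q -> FQ X) (z : Q -> rat)
  : Prop := in_R2 z /\ partialA y z = (fun _ => 0).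

Definition piSyz2_surjective (X : Type) (Q : choiceType) (y : Q -> FQ X) : Prop :=
  forall z, in_kerA y z -> exists r, in_kerK y r /\ pi12 r = z.

(* the family (y_q + I_F^3)_q is Q-linearly independent in F / I_F^3
   (equivalently in the subspace (M + I_F^3)/I_F^3) *)
Definition lin_indep_mod_IF3 (X : Type) (Q : choiceType) (y : Q -> FQ X) : Prop :=
  forall c : Q -> rat, finite_set [set q | c q != 0] ->
    in_IFpow 3 (fun w => \sum_(q \in [set: Q]) c q * y q w) ->
    forall q, c q = 0.

From mathcomp Require Import all_boot all_order all_algebra.
From mathcomp Require Import boolp classical_sets cardinality fsbigop.
Set Implicit Arguments. Unset Strict Implicit. Unset Printing Implicit Defensive.
Import GRing.Theory.
Local Open Scope classical_set_scope.
Local Open Scope ring_scope.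

(* Since every y_q lies in I_F^2, the degree-2 component of sum_q z_q y_q is
   partial_A z.  Hence a relation z in ker partial_A makes sum_q z_q y_q lie in
   I_F^3, and linear independence modulo I_F^3 forces z = 0.  So ker partial_A
   is trivial and the zero syzygy is a preimage of every element. *)

Section PVHDegree2.

Variables (X : Type) (Q : choiceType) (y : Q -> FQ X).
Hypothesis y_in_IF2 : forall q, in_IFpow 2 (y q).

Lemma in_IF3_of_partialA_eq0 (z : Q -> rat) :
  partialA y z = (fun _ => 0) ->
  in_IFpow 3 (fun w => \sum_(q \in [set: Q]) z q * y q w).
Proof.
move=> hA w w_lt3.
have [w2|w_ne2] := eqVneq (size w) 2%N.
  by have := congr1 (fun f => f w) hA; rewrite /partialA /= w2 eqxx.
have w_lt2 : (size w < 2)%N by move: w_lt3 w_ne2; case: (size w) => [|[|[|]]].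
by rewrite fsbig1 // => q _; rewrite y_in_IF2 ?mulr0.
Qed.

Lemma kerA_eq0 (z : Q -> rat) :
  lin_indep_mod_IF3 y -> in_kerA y z -> forall q, z q = 0.
Proof.
move=> hind [z_fin hA]; apply: hind => //.
exact: in_IF3_of_partialA_eq0.
Qed.

End PVHDegree2.

Lemma in_kerK0 (X : Type) (Q : choiceType) (y : Q -> FQ X) :
  in_kerK y (fun _ _ _ => 0).
Proof.
split.
  move=> n; apply: (sub_finite_set _ (finite_set0 _)).
  by move=> t /= [_ /eqP].
apply/funext => w; rewrite /partialK.
apply: big1 => i _; apply: big1 => j _.
by rewrite fsbig1 // => q _; rewrite mul0r.
Qed.

Theorem proposition3p5 (X : Type) (Q : choiceType) (y : Q -> FQ X) :
  (forall q, in_IFpow 2 (y q)) ->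
  lin_indep_mod_IF3 y ->
  piSyz2_surjective y.
Proof.
move=> y_in_IF2 hind z hz.
exists (fun _ _ _ => 0); split; first exact: in_kerK0.
by apply/funext => q; rewrite /pi12 (kerA_eq0 y_in_IF2 hind hz).
Qed.
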